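(* Let $\mathcal T$ be a theory of $\mathsf{LGIM}$, let $\alpha_1,\dots,\alpha_n,\beta$ be basic expressions ($n\ge1$) and $c_1,\dots,c_n,d\in[0,1]$, and assume that every element of $\tau(\alpha_1,c_1),\dots,\tau(\alpha_n,c_n)$ and of $\tau(\beta,d)$ is provable from $\mathcal T$ in $\mathsf{LGIM}$. Then for $r\in[0,1]$: if $r<1-\mathrm{avg}(c_1,\dots,c_n)+d$ then $\mathcal T\vdash_{\mathsf{LGIM}}\alpha_1,\dots,\alpha_n\Rightarrow_r\beta$, and if $r>1-\mathrm{avg}(c_1,\dots,c_n)+d$ then $\mathcal T\vdash_{\mathsf{LGIM}}\lnot(\alpha_1,\dots,\alpha_n\Rightarrow_r\beta)$.
   Context: Fix a continuous t-norm $\odot$ on $[0,1]$ and let $c\oplus d = 1-((1-c)\odot(1-d))$. Write $c\odot_{\L} d=\max(c+d-1,0)$, $c\oplus_{\L} d=\min(c+d,1)$, and $\mathrm{avg}(r_1,\dots,r_n)=(r_1+\dots+r_n)/n$. Basic expressions: built from countably many variables $\phi_0,\phi_1,\dots$ and constants $\bot,\top$ by binary $\land,\lor,\odot$ and unary $\sim$. A generalised graded implication is written $\alpha_1,\dots,\alpha_n\Rightarrow_c\beta$ where $n\ge1$, $\alpha_1,\dots,\alpha_n$ is a multiset of basic expressions, $\beta$ a basic expression, $c\in[0,1]$; for $n=1$ it is a graded implication $\alpha\Rightarrow_c\beta$. Formulas of $\mathsf{LGIM}$ are built from generalised graded implications by classical $\land,\lor,\lnot$; $\Phi\to\Psi$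 abbreviates $\lnot\Phi\lor\Psi$. A theory is a set of formulas. For a basic expression $\alpha$ and $c\in[0,1]$, $\tau(\alpha,c)=\{\top\Rightarrow_t\alpha : t\in[0,1],\ t<c\}\cup\{\alpha\Rightarrow_{1-t}\bot : t\in[0,1],\ t>c\}$. Calculus $\mathsf{LGIM}$: axioms are (i) all substitution instances (by generalised graded implications) of classical propositional tautologies; (ii) for all basic expressions $\alpha,\beta,\gamma$ and $c,d\in[0,1]$: ($\land_1$) $(\alpha\Rightarrow_d\beta)\land(\alpha\Rightarrow_d\gamma)\to(\alpha\Rightarrow_d\beta\land\gamma)$; ($\land_2$) $\alpha\land\beta\Rightarrow_1\alpha$; ($\land_3$) $\alpha\land\beta\Rightarrow_1\beta$; ($\lor_1$) $(\alpha\Rightarrow_d\gamma)\land(\beta\Rightarrow_d\gamma)\to(\alpha\lor\beta\Rightarrow_d\gamma)$; ($\lor_2$) $\alpha\Rightarrow_1\alpha\lor\beta$; ($\lor_3$) $\beta\Rightarrow_1\alpha\lor\beta$; ($\odot_1$) $(\top\Rightarrow_c\alpha)\land(\top\Rightarrow_d\beta)\to(\top\Rightarrow_{c\odot d}\alpha\odot\beta)$; ($\odot_2$) $(\alpha\Rightarrow_c\bot)\land(\beta\Rightarrow_d\bot)\to(\alpha\odot\beta\Rightarrow_{c\oplus d}\bot)$; ($\odot_3$) $\top\Rightarrow_1\top\odot\top$; ($\sim_1$) $(\alpha\Rightarrow_d\beta)\to(\sim\beta\Rightarrow_d\sim\alpha)$; ($\sim_2$) $\sim\sim\alpha\Rightarrow_1\alpha$;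 ($\sim_3$) $\alpha\Rightarrow_1\sim\sim\alpha$; ($\top$) $\alpha\Rightarrow_1\top$; ($\bot$) $\bot\Rightarrow_1\alpha$; (0) $\alpha\Rightarrow_0\beta$; ($c$) $\alpha\Rightarrow_c\alpha$; (inkons) $\lnot(\top\Rightarrow_c\bot)$ for $c>0$; (trans$_1$) $(\alpha\Rightarrow_c\beta)\land(\beta\Rightarrow_d\gamma)\to(\alpha\Rightarrow_{c\odot_{\L}d}\gamma)$; (trans$_2$) $(\alpha\Rightarrow_c\bot)\land(\top\Rightarrow_d\beta)\to(\alpha\Rightarrow_{c\oplus_{\L}d}\beta)$; (lin$_1$) $(\alpha\Rightarrow_1\beta)\lor(\beta\Rightarrow_1\alpha)$; (lin$_2$) $(\top\Rightarrow_d\alpha)\lor(\alpha\Rightarrow_{1-d}\bot)$; (iii) for all basic expressions $\alpha,\alpha_i,\beta_i,\beta,\gamma$ and $c,c_i,d\in[0,1]$: (trans$\varnothing_1$) $(\alpha_1\Rightarrow_{c_1}\beta_1)\land\dots\land(\alpha_n\Rightarrow_{c_n}\beta_n)\land(\beta_1,\dots,\beta_n\Rightarrow_d\gamma)\to(\alpha_1,\dots,\alpha_n\Rightarrow_{\mathrm{avg}(c_1,\dots,c_n)\odot_{\L}d}\gamma)$; (trans$\varnothing_2$) $(\alpha_1,\dots,\alpha_n\Rightarrow_c\beta)\land(\beta\Rightarrow_d\gamma)\to(\alpha_1,\dots,\alpha_n\Rightarrow_{c\odot_{\L}d}\gamma)$; (trans$\varnothing_3$) $(\alpha_1\Rightarrow_{c_1}\bot)\land\dots\land(\alpha_n\Rightarrow_{c_n}\bot)\land(\top\Rightarrow_d\beta)\to(\alpha_1,\dots,\alpha_n\Rightarrow_{\mathrm{avg}(c_1,\dots,c_n)\oplus_{\L}d}\beta)$;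 ($\top\varnothing$) $(\top,\dots,\top\Rightarrow_c\alpha)\to(\top\Rightarrow_c\alpha)$. The only rule is modus ponens. $\mathcal T\vdash_{\mathsf{LGIM}}\Phi$ means $\Phi$ has a finite derivation from axioms and elements of $\mathcal T$ by modus ponens. *)

From Stdlib Require Import Reals List Permutation.
Import ListNotations.
Open Scope R_scope.

Definition unit_iv (x : R) : Prop := 0 <= x <= 1.

Record is_cont_tnorm (tn : R -> R -> R) : Prop := {
  tn_range : forall x y, unit_iv x -> unit_iv y -> unit_iv (tn x y);
  tn_comm  : forall x y, unit_iv x -> unit_iv y -> tn x y = tn y x;
  tn_assoc : forall x y z, unit_iv x -> unit_iv y -> unit_iv z ->
               tn x (tn y z) = tn (tn x y) z;
  tn_mono  : forall x x' y, unit_iv x -> unit_iv x' -> unit_iv y ->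
               x <= x' -> tn x y <= tn x' y;
  tn_unit  : forall x, unit_iv x -> tn x 1 = x;
  tn_cont  : forall x y, unit_iv x -> unit_iv y ->
               forall eps, 0 < eps -> exists delta, 0 < delta /\
               forall x' y', unit_iv x' -> unit_iv y' ->
                 Rabs (x - x') < delta -> Rabs (y - y') < delta ->
                 Rabs (tn x y - tn x' y') < eps
}.

Definition tconorm (tn : R -> R -> R) (c d : R) : R := 1 - tn (1 - c) (1 - d).
Definition lmul (c d : R) : R := Rmax (c + d - 1) 0.
Definition ladd (c d : R) : R := Rmin (c + d) 1.
Definition avg (l : list R) : R := fold_right Rplus 0 l / INR (length l).

Definition grade : Type := {r : R | 0 <= r <= 1}.
Definition gv (g : grade) : R := proj1_sig g.

Inductive BExp : Type :=
| BVar  : nat -> BExp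
| BBot  : BExp
| BTop  : BExp
| BAnd  : BExp -> BExp -> BExp
| BOr   : BExp -> BExp -> BExp
| BOdot : BExp -> BExp -> BExp
| BNeg  : BExp -> BExp.

(** Generalised graded implication  a, as_1, ..., as_k  =>_c  b
    (antecedent multiset represented by the nonempty list a :: as_;
     permutations are identified via the axiom [ax_perm] below). *)
Inductive GImp : Type :=
| GI : BExp -> list BExp -> BExp -> grade -> GImp.

Inductive Formula : Type :=
| FAtom : GImp -> Formula
| FAnd  : Formula -> Formula -> Formula
| FOr   : Formula -> Formula -> Formula
| FNot  : Formula -> Formula.

Definition FImp (f g : Formula) : Formula := FOr (FNot f) g.

Definition imp1 (a b : BExp) (c : grade) : Formula := FAtom (GI a [] b c).

Definition conjs (last : Formula) (l : list Formula) : Formula :=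
  fold_right FAnd last l.

Fixpoint feval (v : GImp -> bool) (f : Formula) : bool :=
  match f with
  | FAtom g => v g
  | FAnd f1 f2 => andb (feval v f1) (feval v f2)
  | FOr f1 f2 => orb (feval v f1) (feval v f2)
  | FNot f1 => negb (feval v f1)
  end.

(** substitution instances of classical propositional tautologies
    = formulas true under every Boolean valuation of the atoms *)
Definition tautology (f : Formula) : Prop := forall v, feval v f = true.

Definition tr1 (t : BExp * grade * BExp) : BExp := fst (fst t).
Definition tr2 (t : BExp * grade * BExp) : grade := snd (fst t).
Definition tr3 (t : BExp * grade * BExp) : BExp := snd t.

Inductive Ax (tn : R -> R -> R) : Formula -> Prop :=
| ax_taut : forall f, tautology f -> Ax tn f
| ax_and1 : forall a b g d,
    Ax tn (FImp (FAnd (imp1 a b d) (imp1 a g d)) (imp1 a (BAnd b g) d))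
| ax_and2 : forall a b (one : grade), gv one = 1 -> Ax tn (imp1 (BAnd a b) a one)
| ax_and3 : forall a b (one : grade), gv one = 1 -> Ax tn (imp1 (BAnd a b) b one)
| ax_or1 : forall a b g d,
    Ax tn (FImp (FAnd (imp1 a g d) (imp1 b g d)) (imp1 (BOr a b) g d))
| ax_or2 : forall a b (one : grade), gv one = 1 -> Ax tn (imp1 a (BOr a b) one)
| ax_or3 : forall a b (one : grade), gv one = 1 -> Ax tn (imp1 b (BOr a b) one)
| ax_odot1 : forall a b c d (e : grade), gv e = tn (gv c) (gv d) ->
    Ax tn (FImp (FAnd (imp1 BTop a c) (imp1 BTop b d)) (imp1 BTop (BOdot a b) e))
| ax_odot2 : forall a b c d (e : grade), gv e = tconorm tn (gv c) (gv d) ->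
    Ax tn (FImp (FAnd (imp1 a BBot c) (imp1 b BBot d)) (imp1 (BOdot a b) BBot e))
| ax_odot3 : forall (one : grade), gv one = 1 ->
    Ax tn (imp1 BTop (BOdot BTop BTop) one)
| ax_neg1 : forall a b d,
    Ax tn (FImp (imp1 a b d) (imp1 (BNeg b) (BNeg a) d))
| ax_neg2 : forall a (one : grade), gv one = 1 -> Ax tn (imp1 (BNeg (BNeg a)) a one)
| ax_neg3 : forall a (one : grade), gv one = 1 -> Ax tn (imp1 a (BNeg (BNeg a)) one)
| ax_top : forall a (one : grade), gv one = 1 -> Ax tn (imp1 a BTop one)
| ax_bot : forall a (one : grade), gv one = 1 -> Ax tn (imp1 BBot a one)
| ax_zero : forall a b (z : grade), gv z = 0 -> Ax tn (imp1 a b z)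
| ax_refl : forall a c, Ax tn (imp1 a a c)
| ax_inkons : forall c, 0 < gv c -> Ax tn (FNot (imp1 BTop BBot c))
| ax_trans1 : forall a b g c d (e : grade), gv e = lmul (gv c) (gv d) ->
    Ax tn (FImp (FAnd (imp1 a b c) (imp1 b g d)) (imp1 a g e))
| ax_trans2 : forall a b c d (e : grade), gv e = ladd (gv c) (gv d) ->
    Ax tn (FImp (FAnd (imp1 a BBot c) (imp1 BTop b d)) (imp1 a b e))
| ax_lin1 : forall a b (one : grade), gv one = 1 ->
    Ax tn (FOr (imp1 a b one) (imp1 b a one))
| ax_lin2 : forall a d (e : grade), gv e = 1 - gv d ->
    Ax tn (FOr (imp1 BTop a d) (imp1 a BBot e))
| ax_transN1 : forall (t0 : BExp * grade * BExp) (ts : list (BExp * grade * BExp))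
      g d (e : grade),
    gv e = lmul (avg (map (fun t => gv (tr2 t)) (t0 :: ts))) (gv d) ->
    Ax tn (FImp
      (conjs (FAtom (GI (tr3 t0) (map tr3 ts) g d))
             (map (fun t => imp1 (tr1 t) (tr3 t) (tr2 t)) (t0 :: ts)))
      (FAtom (GI (tr1 t0) (map tr1 ts) g e)))
| ax_transN2 : forall a as_ b g c d (e : grade), gv e = lmul (gv c) (gv d) ->
    Ax tn (FImp (FAnd (FAtom (GI a as_ b c)) (imp1 b g d)) (FAtom (GI a as_ g e)))
| ax_transN3 : forall (p0 : BExp * grade) (ps : list (BExp * grade)) b d (e : grade),
    gv e = ladd (avg (map (fun p => gv (snd p)) (p0 :: ps))) (gv d) ->
    Ax tn (FImp
      (conjs (imp1 BTop b d) (map (fun p => imp1 (fst p) BBot (snd p)) (p0 :: ps)))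
      (FAtom (GI (fst p0) (map fst ps) b e)))
| ax_topN : forall (k : nat) a c,
    Ax tn (FImp (FAtom (GI BTop (repeat BTop k) a c)) (imp1 BTop a c))
(* antecedents form a multiset: permuted antecedent lists denote the same
   generalised graded implication *)
| ax_perm : forall a as_ a' as_' b c, Permutation (a :: as_) (a' :: as_') ->
    Ax tn (FImp (FAtom (GI a as_ b c)) (FAtom (GI a' as_' b c))).

Inductive Deriv (tn : R -> R -> R) (T : Formula -> Prop) : Formula -> Prop :=
| d_ax  : forall f, Ax tn f -> Deriv tn T f
| d_hyp : forall f, T f -> Deriv tn T f
| d_mp  : forall f g, Deriv tn T (FImp f g) -> Deriv tn T f -> Deriv tn T g.

Definition in_tau (a : BExp) (c : grade) (f : Formula) : Prop :=
  (exists t : grade, gv t < gv c /\ f = imp1 BTop a t) \/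
  (exists t e : grade, gv t > gv c /\ gv e = 1 - gv t /\ f = imp1 a BBot e).

Definition tau_provable (tn : R -> R -> R) (T : Formula -> Prop) (a : BExp) (c : grade)
  : Prop := forall f, in_tau a c f -> Deriv tn T f.

(* For every eps > 0 the tau-hypotheses give top =>_{c_i - eps} alpha_i,
   alpha_i =>_{1 - c_i - eps} bot, top =>_{d - eps} beta and beta =>_{1 - d - eps} bot.
   Below the threshold, (trans0_3) combines them into alpha_1, ..., alpha_n =>_r beta for
   every r up to 1 - avg c + d - 2 eps.  Above it, (trans0_1) and (top0) turn
   alpha_1, ..., alpha_n =>_r beta into top =>_{avg c + r - 1 - eps} beta, and (trans_1)
   with beta =>_{1 - d - eps} bot yields top =>_s bot for some s > 0, contradicting (inkons). *)
From Stdlib Require Import Reals List Lra.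
Open Scope R_scope.
Import ListNotations.

Definition grade_of (x : R) : grade :=
  exist _ (Rmax 0 (Rmin x 1))
    (conj (Rmax_l 0 _) (Rmax_lub 0 (Rmin x 1) 1 Rle_0_1 (Rmin_r x 1))).

Lemma gv_range (g : grade) : 0 <= gv g <= 1.
Proof. exact (proj2_sig g). Qed.

Lemma gv_grade_of x : 0 <= x <= 1 -> gv (grade_of x) = x.
Proof. intros Hx. unfold gv, grade_of; simpl. unfold Rmax, Rmin. repeat destruct Rle_dec; lra. Qed.

Lemma gv_grade_of_nonpos x : x <= 0 -> gv (grade_of x) = 0.
Proof. intros Hx. unfold gv, grade_of; simpl. unfold Rmax, Rmin. repeat destruct Rle_dec; lra. Qed.

Lemma le_gv_grade_of x : x <= 1 -> x <= gv (grade_of x).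
Proof. intros Hx. unfold gv, grade_of; simpl. unfold Rmax, Rmin. repeat destruct Rle_dec; lra. Qed.

Lemma lmul_range x y : 0 <= x <= 1 -> 0 <= y <= 1 -> 0 <= lmul x y <= 1.
Proof. intros. unfold lmul, Rmax. destruct Rle_dec; lra. Qed.

Lemma ladd_range x y : 0 <= x <= 1 -> 0 <= y <= 1 -> 0 <= ladd x y <= 1.
Proof. intros. unfold ladd, Rmin. destruct Rle_dec; lra. Qed.

Lemma sum_map_le {A} (f g : A -> R) l : (forall x, In x l -> f x <= g x) ->
  fold_right Rplus 0 (map f l) <= fold_right Rplus 0 (map g l).
Proof.
  induction l as [|x l IH]; intros Hfg; simpl; [lra|].
  apply Rplus_le_compat; [apply Hfg; now left | apply IH; intros y Hy; apply Hfg; now right].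
Qed.

Lemma sum_map_affine {A} (f : A -> R) a k l :
  fold_right Rplus 0 (map (fun x => a * f x + k) l) =
  a * fold_right Rplus 0 (map f l) + k * INR (length l).
Proof.
  induction l as [|x l IH]; [simpl; ring|].
  cbn [map fold_right length]. rewrite S_INR, IH. ring.
Qed.

Lemma INR_length_cons_pos {A} (x0 : A) l : 0 < INR (length (x0 :: l)).
Proof. apply lt_0_INR. simpl. apply Nat.lt_0_succ. Qed.

Lemma avg_le_map {A} (f g : A -> R) x0 l : (forall x, In x (x0 :: l) -> f x <= g x) ->
  avg (map f (x0 :: l)) <= avg (map g (x0 :: l)).
Proof.
  intros Hfg. unfold avg, Rdiv. rewrite !length_map.
  apply Rmult_le_compat_r; [|now apply sum_map_le].
  apply Rlt_le, Rinv_0_lt_compat, INR_length_cons_pos.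
Qed.

Lemma avg_map_affine {A} (f : A -> R) a k x0 l :
  avg (map (fun x => a * f x + k) (x0 :: l)) = a * avg (map f (x0 :: l)) + k.
Proof.
  pose proof (INR_length_cons_pos x0 l).
  unfold avg. rewrite !length_map, sum_map_affine. field. lra.
Qed.

Lemma avg_ge_affine {A} (f g : A -> R) a k x0 l :
  (forall x, In x (x0 :: l) -> a * f x + k <= g x) ->
  a * avg (map f (x0 :: l)) + k <= avg (map g (x0 :: l)).
Proof. intros H. rewrite <- avg_map_affine. now apply avg_le_map. Qed.

Lemma avg_map_range {A} (f : A -> R) x0 l : (forall x, In x (x0 :: l) -> 0 <= f x <= 1) ->
  0 <= avg (map f (x0 :: l)) <= 1.
Proof.
  intros Hf.
  pose proof (avg_le_map (fun x => 0 * f x + 0) f x0 l) as Hlo.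
  pose proof (avg_le_map f (fun x => 0 * f x + 1) x0 l) as Hhi.
  rewrite avg_map_affine in Hlo, Hhi.
  split; [enough (0 * avg (map f (x0 :: l)) + 0 <= avg (map f (x0 :: l))) by lra; apply Hlo
         |enough (avg (map f (x0 :: l)) <= 0 * avg (map f (x0 :: l)) + 1) by lra; apply Hhi];
    intros x Hx; specialize (Hf x Hx); lra.
Qed.

Ltac bool_cases :=
  let v := fresh "v" in
  intro v; unfold FImp; simpl;
  repeat match goal with
         | |- context [v ?g] => destruct (v g)
         | |- context [feval v ?f] => destruct (feval v f)
         end; simpl; intro; first [reflexivity | discriminate].

Ltac Forall_split := repeat apply Forall_cons; try apply Forall_nil.

Section Derivations.
Variable tn : R -> R -> R.
Variable T : Formula -> Prop.

Lemma Deriv_consequence (fs : list Formula) (h : Formula) :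
  Forall (Deriv tn T) fs ->
  (forall v, forallb (feval v) fs = true -> feval v h = true) ->
  Deriv tn T h.
Proof.
  revert h; induction fs as [|f fs IH]; intros h Hfs Hsem.
  - apply d_ax, ax_taut. intro v. now apply Hsem.
  - inversion_clear Hfs as [|? ? Hf Hfs'].
    apply (d_mp _ _ f h); [|exact Hf].
    apply IH; [exact Hfs'|]. intros v Hv. unfold FImp; simpl.
    specialize (Hsem v). simpl in Hsem. rewrite Hv in Hsem.
    destruct (feval v f); simpl; auto.
Qed.

Lemma Deriv_imp_conjs f l : (forall x, In x l -> Deriv tn T x) ->
  Deriv tn T (FImp f (conjs f l)).
Proof.
  induction l as [|x l IH]; intros Hl.
  - apply (Deriv_consequence nil); [constructor | bool_cases].
  - apply (Deriv_consequence [x; FImp f (conjs f l)]); [Forall_split | bool_cases].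
    + apply Hl; now left.
    + apply IH; intros y Hy; apply Hl; now right.
Qed.

Lemma Deriv_conjs_antecedent f g l : Deriv tn T (FImp (conjs f l) g) ->
  (forall x, In x l -> Deriv tn T x) -> Deriv tn T (FImp f g).
Proof.
  intros Hfg Hl. apply (Deriv_consequence [FImp f (conjs f l); FImp (conjs f l) g]).
  - Forall_split; [now apply Deriv_imp_conjs | exact Hfg].
  - bool_cases.
Qed.

Lemma Deriv_weaken_grade a as_ b (s r : grade) : gv r <= gv s ->
  Deriv tn T (FAtom (GI a as_ b s)) -> Deriv tn T (FAtom (GI a as_ b r)).
Proof.
  intros Hrs Hs. pose proof (gv_range r). pose proof (gv_range s).
  (* (trans0_2) with beta =>_k beta, where s (.)_L k = r *)
  set (k := grade_of (1 - gv s + gv r)).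
  assert (Hk : gv k = 1 - gv s + gv r) by (apply gv_grade_of; lra).
  assert (Hr : gv r = lmul (gv s) (gv k)) by (rewrite Hk; unfold lmul, Rmax; destruct Rle_dec; lra).
  apply (Deriv_consequence [FImp (FAnd (FAtom (GI a as_ b s)) (imp1 b b k)) (FAtom (GI a as_ b r));
                            FAtom (GI a as_ b s); imp1 b b k]).
  - Forall_split; [apply d_ax, ax_transN2; exact Hr | exact Hs | apply d_ax, ax_refl].
  - bool_cases.
Qed.

Lemma Deriv_GI_of_bot (f : BExp * grade -> grade) p0 ps b (d r : grade) :
  (forall p, In p (p0 :: ps) -> Deriv tn T (imp1 (fst p) BBot (f p))) ->
  Deriv tn T (imp1 BTop b d) ->
  gv r <= ladd (avg (map (fun p => gv (f p)) (p0 :: ps))) (gv d) ->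
  Deriv tn T (FAtom (GI (fst p0) (map fst ps) b r)).
Proof.
  intros Hbot Hd Hr.
  set (A := avg (map (fun p => gv (f p)) (p0 :: ps))).
  assert (HA : 0 <= A <= 1) by (apply avg_map_range; intros; apply gv_range).
  set (e := grade_of (ladd A (gv d))).
  assert (He : gv e = ladd A (gv d)) by (apply gv_grade_of, ladd_range; auto using gv_range).
  apply (Deriv_weaken_grade _ _ _ e); [now rewrite He|].
  set (G := fun p : BExp * grade => (fst p, f p)).
  assert (Hax := ax_transN3 tn (G p0) (map G ps) b d e).
  change (G p0 :: map G ps) with (map G (p0 :: ps)) in Hax.
  rewrite !map_map in Hax. specialize (Hax He).
  replace (map fst ps) with (map (fun p => fst (G p)) ps) by (apply map_ext; reflexivity).
  apply (d_mp _ _ (imp1 BTop b d)); [|exact Hd].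
  apply (Deriv_conjs_antecedent _ _ _ (d_ax _ _ _ Hax)).
  intros x Hx. apply in_map_iff in Hx. destruct Hx as [p [<- Hp]]. exact (Hbot p Hp).
Qed.

Lemma Deriv_GI_imp_top (f : BExp * grade -> grade) p0 ps b (r : grade) :
  (forall p, In p (p0 :: ps) -> Deriv tn T (imp1 BTop (fst p) (f p))) ->
  Deriv tn T (FImp (FAtom (GI (fst p0) (map fst ps) b r))
    (imp1 BTop b (grade_of (lmul (avg (map (fun p => gv (f p)) (p0 :: ps))) (gv r))))).
Proof.
  intros Htop.
  set (A := avg (map (fun p => gv (f p)) (p0 :: ps))).
  assert (HA : 0 <= A <= 1) by (apply avg_map_range; intros; apply gv_range).
  set (e := grade_of (lmul A (gv r))).
  assert (He : gv e = lmul A (gv r)) by (apply gv_grade_of, lmul_range; auto using gv_range).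
  set (tri := fun p : BExp * grade => (BTop, f p, fst p)).
  assert (Hax := ax_transN1 tn (tri p0) (map tri ps) b r e).
  change (tri p0 :: map tri ps) with (map tri (p0 :: ps)) in Hax.
  rewrite !map_map in Hax. specialize (Hax He).
  change (fun x => tr1 (tri x)) with (fun _ : BExp * grade => BTop) in Hax.
  rewrite map_const in Hax.
  replace (map fst ps) with (map (fun p => tr3 (tri p)) ps) by (apply map_ext; reflexivity).
  apply (Deriv_consequence [FImp (FAtom (GI (tr3 (tri p0)) (map (fun p => tr3 (tri p)) ps) b r))
                                 (FAtom (GI BTop (repeat BTop (length ps)) b e));
                            FImp (FAtom (GI BTop (repeat BTop (length ps)) b e)) (imp1 BTop b e)]).
  - Forall_split; [|apply d_ax, ax_topN].
    apply (Deriv_conjs_antecedent _ _ _ (d_ax _ _ _ Hax)).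
    intros x Hx. apply in_map_iff in Hx. destruct Hx as [p [<- Hp]]. exact (Htop p Hp).
  - bool_cases.
Qed.

Lemma Deriv_refute X b (c e : grade) :
  Deriv tn T (FImp X (imp1 BTop b c)) -> Deriv tn T (imp1 b BBot e) ->
  0 < lmul (gv c) (gv e) -> Deriv tn T (FNot X).
Proof.
  intros HX He Hpos.
  set (z := grade_of (lmul (gv c) (gv e))).
  assert (Hz : gv z = lmul (gv c) (gv e)) by (apply gv_grade_of, lmul_range; apply gv_range).
  apply (Deriv_consequence [FImp X (imp1 BTop b c); imp1 b BBot e;
      FImp (FAnd (imp1 BTop b c) (imp1 b BBot e)) (imp1 BTop BBot z);
      FNot (imp1 BTop BBot z)]).
  - Forall_split; [exact HX | exact He | apply d_ax, ax_trans1, Hz | apply d_ax, ax_inkons; lra].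
  - bool_cases.
Qed.

Lemma Deriv_top_of_tau a c : tau_provable tn T a c ->
  forall x, x < gv c -> Deriv tn T (imp1 BTop a (grade_of x)).
Proof.
  intros Ha x Hx. pose proof (gv_range c).
  destruct (Rle_dec x 0) as [Hx0|Hx0].
  - apply d_ax, ax_zero, gv_grade_of_nonpos, Hx0.
  - apply Ha. left. exists (grade_of x). rewrite gv_grade_of by lra. auto.
Qed.

Lemma Deriv_bot_of_tau a c : tau_provable tn T a c ->
  forall x, x < 1 - gv c -> Deriv tn T (imp1 a BBot (grade_of x)).
Proof.
  intros Ha x Hx. pose proof (gv_range c).
  destruct (Rle_dec x 0) as [Hx0|Hx0].
  - apply d_ax, ax_zero, gv_grade_of_nonpos, Hx0.
  - apply Ha. right. exists (grade_of (1 - x)), (grade_of x).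
    rewrite !gv_grade_of by lra. repeat split; auto; lra.
Qed.

Lemma Deriv_GI_below_threshold p0 ps b (d r : grade) :
  (forall p, In p (p0 :: ps) -> tau_provable tn T (fst p) (snd p)) ->
  tau_provable tn T b d ->
  gv r < 1 - avg (map (fun p => gv (snd p)) (p0 :: ps)) + gv d ->
  Deriv tn T (FAtom (GI (fst p0) (map fst ps) b r)).
Proof.
  intros Hps Hb Hr.
  set (C := avg (map (fun p => gv (snd p)) (p0 :: ps))) in Hr.
  set (eps := (1 - C + gv d - gv r) / 2).
  assert (Heps : 0 < eps) by (unfold eps; lra).
  pose proof (gv_range d). pose proof (gv_range r).
  set (f := fun p : BExp * grade => grade_of (1 - gv (snd p) - eps)).
  assert (HA : -1 * C + (1 - eps) <= avg (map (fun p => gv (f p)) (p0 :: ps))).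
  { apply avg_ge_affine. intros p _. pose proof (gv_range (snd p)).
    unfold f. eapply Rle_trans; [|apply le_gv_grade_of; lra]. lra. }
  assert (Hdd : gv d - eps <= gv (grade_of (gv d - eps))) by (apply le_gv_grade_of; lra).
  apply (Deriv_GI_of_bot f _ _ _ (grade_of (gv d - eps))).
  - intros p Hp. apply (Deriv_bot_of_tau _ _ (Hps p Hp)). lra.
  - apply (Deriv_top_of_tau _ _ Hb). lra.
  - unfold ladd, Rmin. destruct Rle_dec; unfold eps in *; lra.
Qed.

Lemma Deriv_not_GI_above_threshold p0 ps b (d r : grade) :
  (forall p, In p (p0 :: ps) -> tau_provable tn T (fst p) (snd p)) ->
  tau_provable tn T b d ->
  gv r > 1 - avg (map (fun p => gv (snd p)) (p0 :: ps)) + gv d ->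
  Deriv tn T (FNot (FAtom (GI (fst p0) (map fst ps) b r))).
Proof.
  intros Hps Hb Hr.
  set (C := avg (map (fun p => gv (snd p)) (p0 :: ps))) in Hr.
  set (eps := (gv r - 1 + C - gv d) / 3).
  assert (Heps : 0 < eps) by (unfold eps; lra).
  pose proof (gv_range d). pose proof (gv_range r).
  set (f := fun p : BExp * grade => grade_of (gv (snd p) - eps)).
  set (A := avg (map (fun p => gv (f p)) (p0 :: ps))).
  assert (HA : 1 * C + - eps <= A).
  { apply avg_ge_affine. intros p _. pose proof (gv_range (snd p)).
    unfold f. eapply Rle_trans; [|apply le_gv_grade_of; lra]. lra. }
  assert (HA1 : 0 <= A <= 1) by (apply avg_map_range; intros; apply gv_range).
  assert (Hbd : 1 - gv d - eps <= gv (grade_of (1 - gv d - eps)))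
    by (apply le_gv_grade_of; lra).
  apply (Deriv_refute _ b (grade_of (lmul A (gv r))) (grade_of (1 - gv d - eps))).
  - apply Deriv_GI_imp_top. intros p Hp. apply (Deriv_top_of_tau _ _ (Hps p Hp)). lra.
  - apply (Deriv_bot_of_tau _ _ Hb). lra.
  - rewrite gv_grade_of by (apply lmul_range; auto).
    unfold lmul, Rmax. repeat destruct Rle_dec; unfold eps in *; lra.
Qed.
End Derivations.

Theorem mainTheorem8 (tn : R -> R -> R) (Htn : is_cont_tnorm tn)
    (T : Formula -> Prop)
    (a0 : BExp) (c0 : grade) (rest : list (BExp * grade)) (b : BExp) (d : grade) :
  (forall p, In p ((a0, c0) :: rest) -> tau_provable tn T (fst p) (snd p)) ->
  tau_provable tn T b d ->
  forall r : grade,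
    (gv r < 1 - avg (map (fun p => gv (snd p)) ((a0, c0) :: rest)) + gv d ->
       Deriv tn T (FAtom (GI a0 (map fst rest) b r))) /\
    (gv r > 1 - avg (map (fun p => gv (snd p)) ((a0, c0) :: rest)) + gv d ->
       Deriv tn T (FNot (FAtom (GI a0 (map fst rest) b r)))).
Proof.
  intros Hps Hb r. split.
  - exact (Deriv_GI_below_threshold tn T (a0, c0) rest b d r Hps Hb).
  - exact (Deriv_not_GI_above_threshold tn T (a0, c0) rest b d r Hps Hb).
Qed.
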